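(* Let $F(\alpha,\beta)=\frac{1}{\sqrt2}(\gamma(\beta)e^{i\alpha},\gamma(\beta)e^{-i\alpha})$ on $S^1\times S^1$. Then $F$ is a Lagrangian immersion. If $F(\alpha_1,\beta_1)=F(\alpha_2,\beta_2)$ with $(\alpha_1,\beta_1)\neq(\alpha_2,\beta_2)$, then $\rho(\beta_1)=\rho(\beta_2)$, $f(\beta_1)\equiv f(\beta_2)+\pi\pmod{2\pi}$ and $\alpha_1\equiv\alpha_2+\pi\pmod{2\pi}$; each of $(\alpha_1,\beta_1)$ and $(\alpha_2,\beta_2)$ determines the other uniquely, so every self-intersection point of $L_\gamma$ is a double point. At such a double point $\partial_\alpha F(\alpha_1,\beta_1)=\partial_\alpha F(\alpha_2,\beta_2)$, so the self-intersection is never transversal; the two sheets are tangent (span a common $2$-plane) if and only if $\dot\gamma(\beta_1)$ and $\dot\gamma(\beta_2)$ are parallel.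
   Context: Let $\gamma:S^1=\mathbb{R}/2\pi\mathbb{Z}\to\mathbb{C}\setminus\{0\}$ be a smooth regular simple closed curve written as $\gamma(\beta)=\rho(\beta)e^{if(\beta)}$ with $\rho>0$. $\mathbb{C}^2$ carries the standard symplectic form $\frac i2(dz_1\wedge d\bar z_1+dz_2\wedge d\bar z_2)$ and Euclidean metric. $L_\gamma=F(S^1\times S^1)$. *)

From Stdlib Require Import Reals ZArith.
From Coquelicot Require Import Coquelicot.

Open Scope R_scope.

Definition cis (t : R) : C := (cos t, sin t).

Definition C2 := (C * C)%type.

Definition F_of (gamma : R -> C) (a b : R) : C2 :=
  ((RtoC (/ sqrt 2) * gamma b * cis a)%C,
   (RtoC (/ sqrt 2) * gamma b * cis (- a))%C).

(* F viewed as a map on (the universal cover R x R of) S^1 x S^1 *)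
Definition Fmap (gamma : R -> C) (p : R * R) : C2 := F_of gamma (fst p) (snd p).

Definition cong2pi (x y : R) : Prop := exists k : Z, x = y + 2 * PI * IZR k.

Definition torus_eq (p q : R * R) : Prop :=
  cong2pi (fst p) (fst q) /\ cong2pi (snd p) (snd q).

(* standard symplectic form (i/2)(dz1 ^ dz1bar + dz2 ^ dz2bar)
   = dx1 ^ dy1 + dx2 ^ dy2 on C^2 *)
Definition omega (u v : C2) : R :=
  Im (Cconj (fst u) * fst v)%C + Im (Cconj (snd u) * snd v)%C.

Definition C2zero : C2 := (RtoC 0, RtoC 0).
Definition c2add (x y : C2) : C2 := ((fst x + fst y)%C, (snd x + snd y)%C).

(* G : R^2 -> C^2 is a Lagrangian immersion: at every point it is
   (Frechet) differentiable with injective differential whose image is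
   isotropic for omega (hence Lagrangian, being 2-dimensional in C^2 = R^4). *)
Definition lagrangian_immersion (G : R * R -> C2) : Prop :=
  forall p : R * R, exists L : R * R -> C2,
    filterdiff G (locally p) L /\
    (forall u : R * R, L u = C2zero -> u = (0, 0)) /\
    (forall u v : R * R, omega (L u) (L v) = 0).

Definition in_image (L : R * R -> C2) (w : C2) : Prop := exists u, w = L u.

Definition same_plane (L1 L2 : R * R -> C2) : Prop :=
  forall w, in_image L1 w <-> in_image L2 w.

Definition transversal (L1 L2 : R * R -> C2) : Prop :=
  forall w : C2, exists u v : R * R, w = c2add (L1 u) (L2 v).

Definition Rparallel (u v : C) : Prop :=
  exists a b : R, (a <> 0 \/ b <> 0) /\ (RtoC a * u + RtoC b * v)%C = RtoC 0.

Definition smooth_R (h : R -> R) : Prop := forall (n : nat) (x : R), ex_derive_n h n x.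
Definition smooth_C (g : R -> C) : Prop :=
  smooth_R (fun t => fst (g t)) /\ smooth_R (fun t => snd (g t)).

From Stdlib Require Import Reals Lra FunctionalExtensionality.
From Coquelicot Require Import Coquelicot.
Open Scope R_scope.

(* Write z = gamma(b) and c = e^{ia}; as e^{-ia} is the conjugate of c,
   F(a1,b1) = F(a2,b2) means z1 c1 = z2 c2 and z1 conj(c1) = z2 conj(c2), with
   |c1| = |c2| = 1.  Multiplying the two equations gives z1^2 = z2^2, hence
   either (z2, c2) = (z1, c1), the same point of the torus because gamma is
   simple, or (z2, c2) = -(z1, c1).  Up to the factor 1/sqrt 2, the
   differential at (a, b) is (u1, u2) |-> ((w + v) c, (w - v) conj(c)) with
   w = u2 gamma'(b) and v = u1 i z.  At a double point both differentials have
   this form with the same z and c, gamma'(b2) being replaced by -gamma'(b2):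
   they share the image of (1, 0); the v-coordinates of their images stay in
   i R z, so they are never transversal; and they coincide exactly when
   gamma'(b1) and gamma'(b2) are real multiples of each other. *)

Lemma filterdiff_pair {U V W : NormedModule R_AbsRing} (f : U -> V) (g : U -> W) x lf lg :
  filterdiff f (locally x) lf -> filterdiff g (locally x) lg ->
  filterdiff (fun y => (f y, g y)) (locally x) (fun y => (lf y, lg y)).
Proof.
  intros Hf Hg.
  apply (filterdiff_comp'_2 f g pair x lf lg pair Hf Hg).
  apply (filterdiff_linear (fun t : prod_NormedModule R_AbsRing V W => (fst t, snd t))).
  apply is_linear_prod; [apply is_linear_fst | apply is_linear_snd].
Qed.

Lemma filterdiff_fst_fct {U V W : NormedModule R_AbsRing} (h : U -> V * W) x l :
  filterdiff h (locally x) l -> filterdiff (fun y => fst (h y)) (locally x) (fun y => fst (l y)).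
Proof.
  intros H. apply (filterdiff_comp' h fst x l fst H).
  apply filterdiff_linear, is_linear_fst.
Qed.

Lemma filterdiff_snd_fct {U V W : NormedModule R_AbsRing} (h : U -> V * W) x l :
  filterdiff h (locally x) l -> filterdiff (fun y => snd (h y)) (locally x) (fun y => snd (l y)).
Proof.
  intros H. apply (filterdiff_comp' h snd x l snd H).
  apply filterdiff_linear, is_linear_snd.
Qed.

Lemma filterdiff_Cmult {U : NormedModule R_AbsRing} (f g : U -> C) x lf lg :
  filterdiff f (locally x) lf -> filterdiff g (locally x) lg ->
  filterdiff (fun y => f y * g y)%C (locally x) (fun y => lf y * g x + f x * lg y)%C.
Proof.
  intros Hf Hg.
  assert (Hcomm : forall m n : R_AbsRing, mult m n = mult n m) by (intros; apply Rmult_comm).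
  pose (prod_rule f' g' lf' lg' Hf' Hg' :=
          @filterdiff_mult_fct R_AbsRing U f' g' x lf' lg' Hcomm Hf' Hg').
  apply (filterdiff_ext_lin _ _ _
    (filterdiff_pair _ _ x _ _
      (filterdiff_minus_fct _ _ _ _
         (prod_rule _ _ _ _ (filterdiff_fst_fct _ _ _ Hf) (filterdiff_fst_fct _ _ _ Hg))
         (prod_rule _ _ _ _ (filterdiff_snd_fct _ _ _ Hf) (filterdiff_snd_fct _ _ _ Hg)))
      (filterdiff_plus_fct _ _ _ _
         (prod_rule _ _ _ _ (filterdiff_fst_fct _ _ _ Hf) (filterdiff_snd_fct _ _ _ Hg))
         (prod_rule _ _ _ _ (filterdiff_snd_fct _ _ _ Hf) (filterdiff_fst_fct _ _ _ Hg))))).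
  intros y. unfold minus, plus, opp, mult; simpl. unfold Cmult, Cplus; simpl. f_equal; ring.
Qed.

Lemma filterdiff_comp_fst {V : NormedModule R_AbsRing} (h : R -> V) (p : R * R) l :
  is_derive h (fst p) l ->
  filterdiff (fun q : R * R => h (fst q)) (locally p) (fun u => scal (fst u) l).
Proof.
  intros H. apply (filterdiff_comp' fst h p fst _ (filterdiff_linear _ is_linear_fst) H).
Qed.

Lemma filterdiff_comp_snd {V : NormedModule R_AbsRing} (h : R -> V) (p : R * R) l :
  is_derive h (snd p) l ->
  filterdiff (fun q : R * R => h (snd q)) (locally p) (fun u => scal (snd u) l).
Proof.
  intros H. apply (filterdiff_comp' snd h p snd _ (filterdiff_linear _ is_linear_snd) H).
Qed.

Lemma is_derive_pair (f g : R -> R) t l1 l2 :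
  is_derive f t l1 -> is_derive g t l2 -> is_derive (fun s => (f s, g s)) t (l1, l2).
Proof.
  intros Hf Hg. apply (filterdiff_ext_lin _ _ _ (filterdiff_pair _ _ t _ _ Hf Hg)).
  reflexivity.
Qed.

Lemma smooth_C_is_derive (g : R -> C) t : smooth_C g -> exists g', is_derive g t g'.
Proof.
  intros [H1 H2]. exists (Derive (fun s => fst (g s)) t, Derive (fun s => snd (g s)) t).
  apply (is_derive_ext (fun s => (fst (g s), snd (g s)))).
  - intros s. symmetry. apply surjective_pairing.
  - apply is_derive_pair; apply Derive_correct; [exact (H1 1%nat t) | exact (H2 1%nat t)].
Qed.

Lemma is_derive_C_unique (h : R -> C) t l l' :
  is_derive h t l -> is_derive h t l' -> l = l'.
Proof.
  intros H H'.
  assert (E1 := is_derive_unique _ _ _ (filterdiff_fst_fct _ _ _ H)).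
  assert (E1' := is_derive_unique _ _ _ (filterdiff_fst_fct _ _ _ H')).
  assert (E2 := is_derive_unique _ _ _ (filterdiff_snd_fct _ _ _ H)).
  assert (E2' := is_derive_unique _ _ _ (filterdiff_snd_fct _ _ _ H')).
  destruct l, l'; simpl in *; congruence.
Qed.

Lemma is_derive_C2_unique (h : R -> C2) t l l' :
  is_derive h t l -> is_derive h t l' -> l = l'.
Proof.
  intros H H'. apply injective_projections.
  - exact (is_derive_C_unique _ _ _ _ (filterdiff_fst_fct _ _ _ H) (filterdiff_fst_fct _ _ _ H')).
  - exact (is_derive_C_unique _ _ _ _ (filterdiff_snd_fct _ _ _ H) (filterdiff_snd_fct _ _ _ H')).
Qed.

Lemma filterdiff_directional {U V : NormedModule R_AbsRing} (G : U -> V) x L u :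
  filterdiff G (locally x) L -> is_derive (fun t : R => G (plus x (scal t u))) 0 (L u).
Proof.
  intros HG.
  assert (Hline : filterdiff (fun t : R => plus x (scal t u)) (locally 0) (fun t => scal t u)).
  { apply (filterdiff_ext_lin _ _ _ (filterdiff_plus_fct _ _ _ _ (filterdiff_const x)
             (filterdiff_linear _ (is_linear_scal_l u)))).
    intros t. apply plus_zero_l. }
  assert (Hx : plus x (scal 0 u) = x)
    by exact (eq_trans (f_equal (plus x) (scal_zero_l u)) (plus_zero_r x)).
  rewrite <- Hx in HG.
  apply (filterdiff_ext_lin _ _ _ (filterdiff_comp' _ G 0 _ _ Hline HG)).
  intros t. exact (linear_scal L (proj1 HG) t u).
Qed.

Lemma filterdiff_C2_unique {U : NormedModule R_AbsRing} (G : U -> C2) x L L' :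
  filterdiff G (locally x) L -> filterdiff G (locally x) L' -> forall u, L u = L' u.
Proof.
  intros H H' u.
  exact (is_derive_C2_unique _ _ _ _ (filterdiff_directional _ _ _ u H)
                                     (filterdiff_directional _ _ _ u H')).
Qed.

Lemma Cmult_integral (z w : C) : (z * w = 0)%C -> z = 0 \/ w = 0.
Proof.
  intros H. apply (f_equal Cmod) in H. rewrite Cmod_mult, Cmod_0 in H.
  destruct (Rmult_integral _ _ H) as [Hz | Hw]; [left | right]; now apply Cmod_eq_0.
Qed.

Lemma Cmult_reg_l (k z w : C) : k <> 0 -> (k * z = k * w)%C -> z = w.
Proof.
  intros Hk H. rewrite <- (Cmult_1_l z), <- (Cmult_1_l w), <- (Cinv_l k Hk),
    <- !Cmult_assoc, H. reflexivity.
Qed.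

Lemma RtoC_eq_0 (r : R) : RtoC r = 0 -> r = 0.
Proof. intros H. now injection H. Qed.

Lemma Cconj_neq_0 (c : C) : c <> 0 -> Cconj c <> 0.
Proof.
  intros Hc E. apply Hc. rewrite <- (Cconj_conj c), E. apply injective_projections; simpl; ring.
Qed.

Lemma cis_neg (t : R) : cis (- t) = Cconj (cis t).
Proof. unfold cis, Cconj; simpl. now rewrite cos_neg, sin_neg. Qed.

Lemma cis_mul_conj (t : R) : (cis t * Cconj (cis t))%C = 1.
Proof.
  unfold cis, Cconj, Cmult; simpl. apply injective_projections; simpl.
  - rewrite <- (sin2_cos2 t). unfold Rsqr. ring.
  - ring.
Qed.

Lemma Cmod_cis (t : R) : Cmod (cis t) = 1.
Proof.
  unfold Cmod, cis; cbn [fst snd].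
  replace (cos t ^ 2 + sin t ^ 2) with 1; [apply sqrt_1|].
  rewrite <- (sin2_cos2 t). unfold Rsqr. ring.
Qed.

Lemma cis_neq_0 (t : R) : cis t <> 0.
Proof. intros H. apply (f_equal Cmod) in H. rewrite Cmod_cis, Cmod_0 in H. lra. Qed.

Lemma cis_add_PI (t : R) : cis (t + PI) = (- cis t)%C.
Proof. unfold cis, Copp; simpl. now rewrite neg_cos, neg_sin. Qed.

Lemma cis_inj (s t : R) : cis s = cis t -> cong2pi s t.
Proof.
  intros H. injection H as Hc Hs.
  assert (Hd : cos (s - t) = 1).
  { rewrite cos_minus, Hc, Hs. rewrite <- (sin2_cos2 t). unfold Rsqr. ring. }
  replace (s - t) with (2 * ((s - t) / 2)) in Hd by field.
  rewrite cos_2a_sin in Hd.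
  destruct (sin_eq_0_0 ((s - t) / 2)) as [k Hk]; [nra|].
  exists k. lra.
Qed.

Lemma is_derive_cis t : is_derive cis t (Ci * cis t)%C.
Proof.
  apply (is_derive_ext (fun s => (cos s, sin s))); [reflexivity|].
  replace (Ci * cis t)%C with (- sin t, cos t)
    by (unfold Ci, cis, Cmult; simpl; f_equal; ring).
  apply is_derive_pair; [apply is_derive_cos | apply is_derive_sin].
Qed.

Lemma is_derive_cis_neg t : is_derive (fun s => cis (- s)) t (- (Ci * cis (- t)))%C.
Proof.
  apply (is_derive_ext (fun s => (cos (- s), sin (- s)))); [reflexivity|].
  replace (- (Ci * cis (- t)))%C with (sin (- t), - cos (- t))
    by (unfold Ci, cis, Cmult, Copp; simpl; f_equal; ring).
  apply is_derive_pair; auto_derive; auto; ring.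
Qed.

Lemma polar_neq_0 (r t : R) : 0 < r -> (RtoC r * cis t)%C <> 0.
Proof.
  intros Hr. apply Cmult_neq_0; [|apply cis_neq_0].
  intros H. apply RtoC_eq_0 in H. lra.
Qed.

Lemma polar_opp_eq (r1 r2 t1 t2 : R) : 0 < r1 -> 0 < r2 ->
  (RtoC r2 * cis t2 = - (RtoC r1 * cis t1))%C -> r1 = r2 /\ cong2pi t1 (t2 + PI).
Proof.
  intros H1 H2 H.
  assert (Hr : r1 = r2).
  { apply (f_equal Cmod) in H. rewrite Cmod_opp, !Cmod_mult, !Cmod_cis, !Cmod_R in H.
    rewrite !Rabs_pos_eq in H by lra. lra. }
  split; [exact Hr|]. subst r2. apply cis_inj. rewrite cis_add_PI.
  apply (Cmult_reg_l (RtoC r1)); [intros E; apply RtoC_eq_0 in E; lra|].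
  replace (RtoC r1 * - cis t2)%C with (- (RtoC r1 * cis t2))%C by ring.
  rewrite H. ring.
Qed.

Lemma square_root_cases (z z' c c' : C) : z <> 0 ->
  (c * Cconj c = 1)%C -> (c' * Cconj c' = 1)%C ->
  (z * c = z' * c')%C -> (z * Cconj c = z' * Cconj c')%C ->
  (z' = z /\ c' = c) \/ (z' = - z /\ c' = - c)%C.
Proof.
  intros Hz Hc Hc' E E'.
  assert (Hsq : ((z' - z) * (z' + z) = 0)%C).
  { transitivity ((z' * c') * (z' * Cconj c') - (z * c) * (z * Cconj c))%C.
    - replace ((z' * c') * (z' * Cconj c'))%C with (z' * z' * (c' * Cconj c'))%C by ring.
      replace ((z * c) * (z * Cconj c))%C with (z * z * (c * Cconj c))%C by ring.
      rewrite Hc, Hc'. ring.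
    - rewrite <- E, <- E'. ring. }
  destruct (Cmult_integral _ _ Hsq) as [H | H]; [left | right].
  - assert (Ez : z' = z) by (rewrite <- (Cplus_0_r z), <- H; ring).
    subst z'. split; [reflexivity|]. symmetry. exact (Cmult_reg_l _ _ _ Hz E).
  - assert (Ez : z' = (- z)%C) by (rewrite <- (Cplus_0_r (- z)), <- H; ring).
    subst z'. split; [reflexivity|].
    apply (Cmult_reg_l z); [exact Hz|].
    replace (z * - c)%C with (- (z * c))%C by ring. rewrite E. ring.
Qed.

Lemma Rparallel_opp_r (g h : C) : Rparallel g (- h) <-> Rparallel g h.
Proof.
  split; intros [a [b [Hab E]]]; exists a, (- b); (split; [lra|]);
    rewrite <- E, RtoC_opp; ring.
Qed.

Definition sheet (c w v : C) : C2 :=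
  ((RtoC (/ sqrt 2) * (w + v) * c)%C, (RtoC (/ sqrt 2) * (w - v) * Cconj c)%C).

(* With z = gamma(b), g = gamma'(b) and c = e^{ia}, this is the differential of
   [Fmap gamma] at (a, b). *)

Definition dFmap (z g c : C) (u : R * R) : C2 :=
  sheet c (RtoC (snd u) * g) (RtoC (fst u) * (Ci * z)).

Lemma inv_sqrt2_neq_0 : RtoC (/ sqrt 2) <> 0.
Proof.
  intros H. apply RtoC_eq_0 in H.
  assert (0 < / sqrt 2) by (apply Rinv_0_lt_compat, sqrt_lt_R0; lra). lra.
Qed.

Lemma sheet_inj (c w v w' v' : C) : c <> 0 -> sheet c w v = sheet c w' v' -> w = w' /\ v = v'.
Proof.
  intros Hc E. unfold sheet in E.
  assert (E1 := f_equal fst E). assert (E2 := f_equal snd E). cbn [fst snd] in E1, E2.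
  assert (Hs := inv_sqrt2_neq_0).
  assert (Hsum : (w + v = w' + v')%C).
  { apply (Cmult_reg_l (RtoC (/ sqrt 2) * c)); [now apply Cmult_neq_0|].
    transitivity (RtoC (/ sqrt 2) * (w + v) * c)%C; [ring|]. rewrite E1. ring. }
  assert (Hdiff : (w - v = w' - v')%C).
  { apply (Cmult_reg_l (RtoC (/ sqrt 2) * Cconj c)); [now apply Cmult_neq_0, Cconj_neq_0|].
    transitivity (RtoC (/ sqrt 2) * (w - v) * Cconj c)%C; [ring|]. rewrite E2. ring. }
  assert (H2 : RtoC 2 <> 0) by (intros H; apply RtoC_eq_0 in H; lra).
  split; apply (Cmult_reg_l (RtoC 2) _ _ H2).
  - transitivity ((w + v) + (w - v))%C; [ring|]. rewrite Hsum, Hdiff. ring.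
  - transitivity ((w + v) - (w - v))%C; [ring|]. rewrite Hsum, Hdiff. ring.
Qed.

Lemma sheet_add (c w v w' v' : C) :
  c2add (sheet c w v) (sheet c w' v') = sheet c (w + w') (v + v').
Proof. unfold c2add, sheet; simpl. f_equal; ring. Qed.

Lemma dFmap_inj (z g c : C) (u : R * R) : z <> 0 -> g <> 0 -> c <> 0 ->
  dFmap z g c u = C2zero -> u = (0, 0).
Proof.
  intros Hz Hg Hc E.
  replace C2zero with (sheet c 0 0) in E by (unfold sheet, C2zero; f_equal; ring).
  destruct (sheet_inj _ _ _ _ _ Hc E) as [Hw Hv].
  destruct (Cmult_integral _ _ Hw) as [Hu2 | Hg0]; [|contradiction].
  destruct (Cmult_integral _ _ Hv) as [Hu1 | Hz0].
  - apply RtoC_eq_0 in Hu1, Hu2. destruct u; simpl in *; now subst.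
  - exact (False_ind _ (Cmult_neq_0 _ _ Ci_nz Hz Hz0)).
Qed.

Lemma dFmap_isotropic (z g c : C) (u v : R * R) :
  omega (dFmap z g c u) (dFmap z g c v) = 0.
Proof.
  destruct z, g, c. unfold omega, dFmap, sheet, Cconj, Cmult, Cplus, Cminus, Copp, Im, Ci, RtoC.
  simpl. ring.
Qed.

Lemma dFmap_opp (z g c : C) : dFmap (- z) g (- c) = dFmap z (- g) c.
Proof.
  apply functional_extensionality. intros u. unfold dFmap, sheet.
  replace (Cconj (- c)) with (- Cconj c)%C by (unfold Cconj, Copp; simpl; f_equal; ring).
  f_equal; ring.
Qed.

Lemma dFmap_alpha_indep (z g h c : C) : dFmap z g c (1, 0) = dFmap z h c (1, 0).
Proof. unfold dFmap, sheet; simpl. f_equal; ring. Qed.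

Lemma dFmap_not_transversal (z g h c : C) : z <> 0 -> c <> 0 ->
  ~ transversal (dFmap z g c) (dFmap z h c).
Proof.
  intros Hz Hc Htr.
  (* The witness has v-coordinate z, which is not in i R z. *)
  destruct (Htr (sheet c 0 z)) as [u [v E]].
  unfold dFmap in E. rewrite sheet_add in E.
  destruct (sheet_inj _ _ _ _ _ Hc E) as [_ Ez].
  assert (Hi : (RtoC (fst u + fst v) * Ci = 1)%C).
  { apply (Cmult_reg_l z _ _ Hz). rewrite RtoC_plus.
    transitivity (RtoC (fst u) * (Ci * z) + RtoC (fst v) * (Ci * z))%C; [ring|].
    rewrite <- Ez. ring. }
  apply (f_equal fst) in Hi. simpl in Hi. lra.
Qed.

Lemma dFmap_scale (z g c : C) (r : R) (u : R * R) :
  dFmap z (RtoC r * g) c u = dFmap z g c (fst u, r * snd u).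
Proof. unfold dFmap, sheet; simpl. rewrite RtoC_mult. f_equal; ring. Qed.

Lemma same_plane_dFmap_scale (z g c : C) (r : R) : r <> 0 ->
  same_plane (dFmap z g c) (dFmap z (RtoC r * g) c).
Proof.
  intros Hr w. split; intros [u ->].
  - exists (fst u, snd u / r). rewrite dFmap_scale. simpl.
    replace (r * (snd u / r)) with (snd u) by (field; exact Hr). now destruct u.
  - exists (fst u, r * snd u). apply dFmap_scale.
Qed.

Lemma same_plane_dFmap_iff (z g h c : C) : g <> 0 -> h <> 0 -> c <> 0 ->
  same_plane (dFmap z g c) (dFmap z h c) <-> Rparallel g h.
Proof.
  intros Hg Hh Hc. split.
  - intros Hsame. destruct (proj2 (Hsame (dFmap z h c (0, 1)))) as [u Hu]; [now exists (0, 1)|].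
    destruct (sheet_inj _ _ _ _ _ Hc Hu) as [Ew _]. cbn [fst snd] in Ew.
    exists (snd u), (Ropp 1). split; [right; lra|].
    rewrite RtoC_opp, <- Ew. ring.
  - intros [a [b [Hab E]]].
    assert (Hb : b <> 0).
    { intros ->. destruct Hab as [Ha | Hb]; [|lra].
      apply Hg, (Cmult_reg_l (RtoC a)); [now intros H%RtoC_eq_0|].
      transitivity (RtoC a * g + RtoC 0 * h)%C; [ring | rewrite E; ring]. }
    assert (Ha : a <> 0).
    { intros ->. apply Hh, (Cmult_reg_l (RtoC b)); [now intros H%RtoC_eq_0|].
      transitivity (RtoC 0 * g + RtoC b * h)%C; [ring | rewrite E; ring]. }
    replace h with (RtoC (- a / b) * g)%C.
    + apply same_plane_dFmap_scale.
      unfold Rdiv. apply Rmult_integral_contrapositive_currified.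
      * now apply Ropp_neq_0_compat.
      * now apply Rinv_neq_0_compat.
    + apply (Cmult_reg_l (RtoC b)); [now intros H%RtoC_eq_0|].
      rewrite Cmult_assoc, <- RtoC_mult.
      replace (b * (- a / b)) with (- a) by (field; exact Hb).
      rewrite RtoC_opp.
      transitivity (- (RtoC a * g) + (RtoC a * g + RtoC b * h))%C; [rewrite E|]; ring.
Qed.

Lemma double_point_sheets (z g1 g2 c : C) : z <> 0 -> g1 <> 0 -> g2 <> 0 -> c <> 0 ->
  dFmap z g1 c (1, 0) = dFmap (- z) g2 (- c) (1, 0) /\
  ~ transversal (dFmap z g1 c) (dFmap (- z) g2 (- c)) /\
  (same_plane (dFmap z g1 c) (dFmap (- z) g2 (- c)) <-> Rparallel g1 g2).
Proof.
  intros Hz Hg1 Hg2 Hc. rewrite dFmap_opp. split; [|split].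
  - apply dFmap_alpha_indep.
  - now apply dFmap_not_transversal.
  - rewrite <- (Rparallel_opp_r g1 g2). apply same_plane_dFmap_iff; try assumption.
    intros H. apply Hg2. transitivity (- - g2)%C; [ring | rewrite H; ring].
Qed.

Lemma filterdiff_Fmap (gamma : R -> C) a b g : is_derive gamma b g ->
  filterdiff (Fmap gamma) (locally (a, b)) (dFmap (gamma b) g (cis a)).
Proof.
  intros Hg.
  assert (Hgam := filterdiff_comp_snd gamma (a, b) g Hg).
  assert (Hcis := filterdiff_comp_fst cis (a, b) _ (is_derive_cis a)).
  assert (Hcisn := filterdiff_comp_fst _ (a, b) _ (is_derive_cis_neg a)).
  assert (Hconst := filterdiff_const (F := locally (a, b)) (RtoC (/ sqrt 2))).
  apply (filterdiff_ext_lin _ _ _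
    (filterdiff_pair _ _ _ _ _
       (filterdiff_Cmult _ _ _ _ _ (filterdiff_Cmult _ _ _ _ _ Hconst Hgam) Hcis)
       (filterdiff_Cmult _ _ _ _ _ (filterdiff_Cmult _ _ _ _ _ Hconst Hgam) Hcisn))).
  intros u. unfold dFmap, sheet. rewrite !scal_R_Cmult, <- cis_neg. simpl.
  change (@zero _) with (RtoC 0).
  (* [ring] only recognizes these equations once they are stated at type [C]. *)
  f_equal; match goal with |- ?x = ?y => change (@eq C x y) end; ring.
Qed.

Lemma Fmap_differential (gamma : R -> C) a b g L : is_derive gamma b g ->
  filterdiff (Fmap gamma) (locally (a, b)) L -> L = dFmap (gamma b) g (cis a).
Proof.
  intros Hg HL. apply functional_extensionality.
  exact (filterdiff_C2_unique _ _ _ _ HL (filterdiff_Fmap gamma a b g Hg)).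
Qed.

Lemma Fmap_double_point (gamma : R -> C) a1 b1 a2 b2 :
  (forall b1 b2 : R, gamma b1 = gamma b2 -> cong2pi b1 b2) -> gamma b1 <> 0 ->
  Fmap gamma (a1, b1) = Fmap gamma (a2, b2) -> ~ torus_eq (a1, b1) (a2, b2) ->
  gamma b2 = (- gamma b1)%C /\ cis a2 = (- cis a1)%C.
Proof.
  intros Hsimple Hz HF HT. unfold Fmap, F_of in HF; simpl in HF.
  assert (E1 := f_equal fst HF). assert (E2 := f_equal snd HF). cbn [fst snd] in E1, E2.
  rewrite !cis_neg in E2. rewrite <- !Cmult_assoc in E1, E2.
  apply Cmult_reg_l in E1, E2; try exact inv_sqrt2_neq_0.
  destruct (square_root_cases _ _ _ _ Hz (cis_mul_conj a1) (cis_mul_conj a2) E1 E2)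
    as [[Eg Ec] | H]; [|exact H].
  exfalso. apply HT. split; simpl.
  - now apply cis_inj.
  - now apply Hsimple.
Qed.

Theorem mainTheorem13 (gamma : R -> C) (rho f : R -> R)
  (Hsmooth : smooth_C gamma)
  (Hper : forall b : R, gamma (b + 2 * PI) = gamma b)
  (Hreg : forall (b : R) (g' : C), is_derive gamma b g' -> g' <> RtoC 0)
  (Hsimple : forall b1 b2 : R, gamma b1 = gamma b2 -> cong2pi b1 b2)
  (Hrho_smooth : smooth_R rho) (Hf_smooth : smooth_R f)
  (Hrho_pos : forall b : R, 0 < rho b)
  (Hpolar : forall b : R, gamma b = (RtoC (rho b) * cis (f b))%C) :
  lagrangian_immersion (Fmap gamma) /\
  (forall a1 b1 a2 b2 : R,
     Fmap gamma (a1, b1) = Fmap gamma (a2, b2) -> ~ torus_eq (a1, b1) (a2, b2) ->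
     rho b1 = rho b2 /\ cong2pi (f b1) (f b2 + PI) /\ cong2pi a1 (a2 + PI)) /\
  (forall p1 p2 p3 : R * R,
     Fmap gamma p1 = Fmap gamma p2 -> Fmap gamma p1 = Fmap gamma p3 ->
     ~ torus_eq p1 p2 -> ~ torus_eq p1 p3 -> torus_eq p2 p3) /\
  (forall (a1 b1 a2 b2 : R) (L1 L2 : R * R -> C2),
     Fmap gamma (a1, b1) = Fmap gamma (a2, b2) -> ~ torus_eq (a1, b1) (a2, b2) ->
     filterdiff (Fmap gamma) (locally (a1, b1)) L1 ->
     filterdiff (Fmap gamma) (locally (a2, b2)) L2 ->
     L1 (1, 0) = L2 (1, 0) /\
     ~ transversal L1 L2 /\
     (forall g1 g2 : C, is_derive gamma b1 g1 -> is_derive gamma b2 g2 ->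
        (same_plane L1 L2 <-> Rparallel g1 g2))).
Proof.
  assert (Hz : forall b, gamma b <> 0) by (intros b; rewrite Hpolar; apply polar_neq_0, Hrho_pos).
  assert (Hdouble := fun a1 b1 a2 b2 => Fmap_double_point gamma a1 b1 a2 b2 Hsimple (Hz b1)).
  split; [|split; [|split]].
  - intros [a b]. destruct (smooth_C_is_derive gamma b Hsmooth) as [g Hg].
    exists (dFmap (gamma b) g (cis a)). split; [now apply filterdiff_Fmap|split].
    + intros u. apply dFmap_inj; [apply Hz | exact (Hreg b g Hg) | apply cis_neq_0].
    + apply dFmap_isotropic.
  - intros a1 b1 a2 b2 HF HT. destruct (Hdouble _ _ _ _ HF HT) as [Eg Ec].
    rewrite !Hpolar in Eg.
    destruct (polar_opp_eq _ _ _ _ (Hrho_pos b1) (Hrho_pos b2) Eg) as [Er Ef].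
    split; [exact Er | split; [exact Ef |]].
    apply cis_inj. rewrite cis_add_PI, Ec. ring.
  - intros [a1 b1] [a2 b2] [a3 b3] HF2 HF3 HT2 HT3.
    destruct (Hdouble _ _ _ _ HF2 HT2) as [Eg2 Ec2], (Hdouble _ _ _ _ HF3 HT3) as [Eg3 Ec3].
    split; simpl; [apply cis_inj; congruence | apply Hsimple; congruence].
  - intros a1 b1 a2 b2 L1 L2 HF HT HL1 HL2. destruct (Hdouble _ _ _ _ HF HT) as [Eg Ec].
    destruct (smooth_C_is_derive gamma b1 Hsmooth) as [g1 Hg1],
             (smooth_C_is_derive gamma b2 Hsmooth) as [g2 Hg2].
    rewrite (Fmap_differential _ _ _ _ _ Hg1 HL1), (Fmap_differential _ _ _ _ _ Hg2 HL2), Eg, Ec.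
    destruct (double_point_sheets (gamma b1) g1 g2 (cis a1) (Hz b1) (Hreg _ _ Hg1)
                (Hreg _ _ Hg2) (cis_neq_0 a1)) as (Halpha & Htr & Hplane).
    split; [exact Halpha | split; [exact Htr |]].
    intros g1' g2' Hg1' Hg2'.
    now rewrite (is_derive_C_unique _ _ _ _ Hg1' Hg1), (is_derive_C_unique _ _ _ _ Hg2' Hg2).
Qed.
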